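(* $w^\ast(3,3)\ge 414$. More precisely, the 3-coloring of $\{1,\dots,413\}$ in which the color of $n$ is the $n$-th letter of the following word (the concatenation of the six lines, of lengths $70,70,70,70,70,63$) contains no monochromatic double 3-term arithmetic progression: 0101102210100201200100221221010010220010112011211202210112122112202210 0110010220201122022002202001012212112122001001120121100110020022002110 2001101001121120210020011210201121122112122010110100110102201220201221 1210021122112122112200110011212200202202001212212112212200110010110012 0211212200220100112202200220200122102212211211002101220022001001100221 211010010110020022110010110010221211020220200220221001122011211
   Context: An increasing sequence of positive integers $a_1<a_2<\cdots$ (finite or infinite) contains a double 3-term arithmetic progression if there are indices $i<j<k$ with $i+k=2j$ and $a_i+a_k=2a_j$. For a coloring of an interval, each color class is regarded as an increasing sequence by listing its elements in increasing order; a monochromatic double 3-term arithmetic progression is a double 3-term arithmetic progression in some color class. $w^\ast(r,3)$ denotes the least integer $N$, if it exists, such that every $r$-coloring of $\{1,\dots,N\}$ has a monochromatic double 3-term arithmetic progression; $w^\ast(3,3)\ge414$ means that either it does not exist or it is at least $414$. *)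

From mathcomp Require Import all_boot.
Set Implicit Arguments. Unset Strict Implicit. Unset Printing Implicit Defensive.

(* An increasing sequence s = (a_1 < a_2 < ...), indexed from 0 here, contains a
   double 3-term AP if there are indices i < j < k with i + k = 2j and
   a_i + a_k = 2 a_j. *)
Definition has_double3AP (s : seq nat) : Prop :=
  exists i j k : nat,
    [/\ i < j, j < k, k < size s, i + k = 2 * j &
        nth 0 s i + nth 0 s k = 2 * nth 0 s j].

Definition color_class (r N : nat) (c : nat -> 'I_r) (col : 'I_r) : seq nat :=
  [seq n <- iota 1 N | c n == col].

(* The coloring c of {1,...,N} has a monochromatic double 3-term AP.
   (Values of c outside {1,...,N} are irrelevant.) *)
Definition mono_double3AP (r N : nat) (c : nat -> 'I_r) : Prop :=
  exists col : 'I_r, has_double3AP (color_class N c col).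

Definition word413 : seq nat := [:: 0; 1; 0; 1; 1; 0; 2; 2; 1; 0; 1; 0; 0; 2; 0; 1; 2; 0; 0; 1; 0; 0; 2; 2; 1; 2; 2; 1; 0; 1; 0; 0; 1; 0; 2; 2; 0; 0; 1; 0; 1; 1; 2; 0; 1; 1; 2; 1; 1; 2; 0; 2; 2; 1; 0; 1; 1; 2; 1; 2; 2; 1; 1; 2; 2; 0; 2; 2; 1; 0; 0; 1; 1; 0; 0; 1; 0; 2; 2; 0; 2; 0; 1; 1; 2; 2; 0; 2; 2; 0; 0; 2; 2; 0; 2; 0; 0; 1; 0; 1; 2; 2; 1; 2; 1; 1; 2; 1; 2; 2; 0; 0; 1; 0; 0; 1; 1; 2; 0; 1; 2; 1; 1; 0; 0; 1; 1; 0; 0; 2; 0; 0; 2; 2; 0; 0; 2; 1; 1; 0; 2; 0; 0; 1; 1; 0; 1; 0; 0; 1; 1; 2; 1; 1; 2; 0; 2; 1; 0; 0; 2; 0; 0; 1; 1; 2; 1; 0; 2; 0; 1; 1; 2; 1; 1; 2; 2; 1; 1; 2; 1; 2; 2; 0; 1; 0; 1; 1; 0; 1; 0; 0; 1; 1; 0; 1; 0; 2; 2; 0; 1; 2; 2; 0; 2; 0; 1; 2; 2; 1; 1; 2; 1; 0; 0; 2; 1; 1; 2; 2; 1; 1; 2; 1; 2; 2; 1; 1; 2; 2; 0; 0; 1; 1; 0; 0; 1; 1; 2; 1; 2; 2; 0; 0; 2; 0; 2; 2; 0; 2; 0; 0; 1; 2; 1; 2; 2; 1; 2; 1; 1; 2;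 2; 1; 2; 2; 0; 0; 1; 1; 0; 0; 1; 0; 1; 1; 0; 0; 1; 2; 0; 2; 1; 1; 2; 1; 2; 2; 0; 0; 2; 2; 0; 1; 0; 0; 1; 1; 2; 2; 0; 2; 2; 0; 0; 2; 2; 0; 2; 0; 0; 1; 2; 2; 1; 0; 2; 2; 1; 2; 2; 1; 1; 2; 1; 1; 0; 0; 2; 1; 0; 1; 2; 2; 0; 0; 2; 2; 0; 0; 1; 0; 0; 1; 1; 0; 0; 2; 2; 1; 2; 1; 1; 0; 1; 0; 0; 1; 0; 1; 1; 0; 0; 2; 0; 0; 2; 2; 1; 1; 0; 0; 1; 0; 1; 1; 0; 0; 1; 0; 2; 2; 1; 2; 1; 1; 0; 2; 0; 2; 2; 0; 2; 0; 0; 2; 2; 0; 2; 2; 1; 0; 0; 1; 1; 2; 2; 0; 1; 1; 2; 1; 1].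

Definition c413 (n : nat) : 'I_3 := inord (nth 0 word413 n.-1).

From mathcomp Require Import all_boot.
From mathcomp Require Import zify.

(* A 3-AP of indices (i, i+d, i+2d) inside a finite sequence
   is determined by its first index and common difference, so the absence of
   double 3-APs is decided by a finite boolean check, proved sound below.
   Having a double 3-AP is inherited by extensions of a sequence, and the
   colour classes of a colouring of {1..N} are prefixes of its colour classes
   on {1..M} for N <= M; hence a colouring of {1..M} without monochromatic
   double 3-AP shows that every N with the Ramsey property exceeds M.  The
   theorem then reduces to computation: the three colour classes of the word
   of length 413 pass the boolean check. *)

Definition double3AP_free (s : seq nat) : bool :=
  all (fun i => all (fun d => (i + 2 * d.+1 < size s) ==>
        (nth 0 s i + nth 0 s (i + 2 * d.+1) != 2 * nth 0 s (i + d.+1)))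
      (iota 0 (size s))) (iota 0 (size s)).

(* Soundness of the test: an index AP i < j < k is (i, i+d+1, i+2(d+1))
   with d = j - i - 1. *)
Lemma double3AP_freeP (s : seq nat) : double3AP_free s -> ~ has_double3AP s.
Proof.
move=> /allP free [i [j [k [lt_ij lt_jk lt_ks mid_j ap_vals]]]].
have i_in : i \in iota 0 (size s) by rewrite mem_iota; lia.
have d_in : (j - i).-1 \in iota 0 (size s) by rewrite mem_iota; lia.
have := allP (free i i_in) _ d_in.
have -> : i + 2 * ((j - i).-1).+1 = k by lia.
have -> : i + ((j - i).-1).+1 = j by lia.
by rewrite lt_ks ap_vals eqxx.
Qed.

Lemma has_double3AP_cat (s1 s2 : seq nat) :
  has_double3AP s1 -> has_double3AP (s1 ++ s2).
Proof.
move=> [i [j [k [lt_ij lt_jk lt_ks mid_j ap_vals]]]].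
exists i, j, k; split => //; first by rewrite size_cat; lia.
have lt_is : i < size s1 by lia.
have lt_js : j < size s1 by lia.
by rewrite !nth_cat lt_is lt_js lt_ks.
Qed.

Lemma color_class_prefix (r M N : nat) (c : nat -> 'I_r) (col : 'I_r) :
  N <= M -> exists s2, color_class M c col = color_class N c col ++ s2.
Proof.
move=> le_NM; rewrite /color_class -(subnKC le_NM) iotaD filter_cat.
by eexists.
Qed.

Lemma mono_double3AP_lower_bound (r M : nat) (c : nat -> 'I_r) :
  ~ mono_double3AP M c ->
  forall N, (forall c' : nat -> 'I_r, mono_double3AP N c') -> M < N.
Proof.
move=> c_free N forced; rewrite ltnNge; apply/negP => le_NM.
have [col ap] := forced c.
have [s2 prefix] := @color_class_prefix r M N c col le_NM.
by apply: c_free; exists col; rewrite prefix; apply: has_double3AP_cat.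
Qed.

Lemma size_word413 : size word413 = 413.
Proof. by []. Qed.

Lemma word413_digits : all (fun d => d < 3) word413.
Proof. by vm_compute. Qed.

Definition word413_class (col : nat) : seq nat :=
  [seq n <- iota 1 413 | nth 0 word413 n.-1 == col].

Lemma word413_classes_free :
  all (fun col => double3AP_free (word413_class col)) (iota 0 3).
Proof. by vm_compute. Qed.

(* Since every letter is a digit below 3, the cast inord in c413 is lossless. *)
Lemma color_class_c413 (col : 'I_3) : color_class 413 c413 col = word413_class col.
Proof.
rewrite /color_class /word413_class; apply: eq_in_filter => n.
rewrite mem_iota => n_range.
have digit : nth 0 word413 n.-1 < 3.
  by apply: (allP word413_digits); apply: mem_nth; rewrite size_word413; lia.
by rewrite -val_eqE /c413 /= inordK.
Qed.

Lemma c413_free : ~ mono_double3AP 413 c413.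
Proof.
move=> [col ap]; have col_in : val col \in iota 0 3 by rewrite mem_iota ltn_ord.
have /double3AP_freeP class_free := allP word413_classes_free _ col_in.
by apply: class_free; rewrite -color_class_c413.
Qed.

Theorem theorem2 :
  size word413 = 413 /\ all (fun d => d < 3) word413 /\
  ~ mono_double3AP 413 c413 /\
  (forall N : nat, (forall c : nat -> 'I_3, mono_double3AP N c) -> 414 <= N).
Proof.
split; first exact: size_word413.
split; first exact: word413_digits.
split; first exact: c413_free.
exact: mono_double3AP_lower_bound c413_free.
Qed.
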